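(* Consider the one-dimensional Euler equations for an ideal gas with $\gamma>1$, and the first order finite volume scheme on a moving mesh \[ h_j^{n+1}\,\bar U_j^{n+1} = h_j^n\,\bar U_j^n - \Delta t_n\,\big[\hat G_{j+1/2}^n - \hat G_{j-1/2}^n\big],\qquad h_j^{n+1} = h_j^n + \Delta t_n\,(w_{j+1/2}^n - w_{j-1/2}^n), \] where $\hat G_{j+1/2}^n = \hat G(\bar U_j^n,\bar U_{j+1}^n,w_{j+1/2}^n)$ is the ALE Rusanov flux with wave speed $\lambda_{j+1/2}^n=\lambda(\bar U_j^n,\bar U_{j+1}^n,w_{j+1/2}^n)$. Fix $\beta\in(0,1)$ and suppose the time step satisfies \[ \Delta t_n \le \min_j\left\{ \frac{(1-\tfrac12\beta)\,h_j^n}{\tfrac12(\lambda_{j-1/2}^n+\lambda_{j+1/2}^n)},\ \frac{\beta\, h_j^n}{|w_{j+1/2}^n - w_{j-1/2}^n|}\right\} \] (the second term is read as $+\infty$ when $w_{j+1/2}^n=w_{j-1/2}^n$). If $\rho_j^n>0$ and $p_j^n>0$ for all $j$, then $h_j^{n+1}>0$, $\rho_j^{n+1}>0$ and $p_j^{n+1}>0$ for all $j$. In other words, the scheme is positivity preserving.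
   Context: Euler equations: $U_t + f(U)_x=0$ with $U=(\rho,\rho v,E)^\top$ and $f(U)=(\rho v,\ p+\rho v^2,\ (E+p)v)^\top$. Here $E=p/(\gamma-1)+\rho v^2/2$ and the sound speed is $c=\sqrt{\gamma p/\rho}$. Mesh: cells $C_j$ have length $h_j^n>0$ at time $t_n$. Each cell face $x_{j+1/2}$ moves with a constant velocity $w_{j+1/2}^n$ on the interval $(t_n,t_{n+1})$. The index $j$ runs over all cells, each of which has two neighbours (for example an infinite or a periodic mesh). $\bar U_j^n$ denotes the cell value, with density $\rho_j^n$, velocity $v_j^n$, pressure $p_j^n$ and sound speed $c_j^n$. ALE flux: $G(U,w)=f(U)-wU$. ALE Rusanov flux: \[ \hat G(U_l,U_r,w)=\tfrac12[G(U_l,w)+G(U_r,w)]-\tfrac12\lambda(U_l,U_r,w)(U_r-U_l), \] with $\lambda(U_l,U_r,w)=\max\{|v_l-w|+c_l,\ |v_r-w|+c_r\}$. *)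

From Stdlib Require Import Reals Lra ZArith.
Open Scope R_scope.

(* Conserved state U = (rho, rho v, E). *)
Record st := mkSt { s_rho : R; s_mom : R; s_E : R }.

Definition st_add (A B : st) : st :=
  mkSt (s_rho A + s_rho B) (s_mom A + s_mom B) (s_E A + s_E B).
Definition st_scale (a : R) (A : st) : st :=
  mkSt (a * s_rho A) (a * s_mom A) (a * s_E A).
Definition st_sub (A B : st) : st := st_add A (st_scale (-1) B).

Definition vel (U : st) : R := s_mom U / s_rho U.
Definition pres (gamma : R) (U : st) : R :=
  (gamma - 1) * (s_E U - (s_mom U)^2 / (2 * s_rho U)).
Definition sound (gamma : R) (U : st) : R :=
  sqrt (gamma * pres gamma U / s_rho U).

Definition flux (gamma : R) (U : st) : st :=
  mkSt (s_rho U * vel U)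
       (pres gamma U + s_rho U * (vel U)^2)
       ((s_E U + pres gamma U) * vel U).

Definition ale_flux (gamma : R) (U : st) (w : R) : st :=
  st_sub (flux gamma U) (st_scale w U).

Definition lam (gamma : R) (Ul Ur : st) (w : R) : R :=
  Rmax (Rabs (vel Ul - w) + sound gamma Ul) (Rabs (vel Ur - w) + sound gamma Ur).

Definition rusanov (gamma : R) (Ul Ur : st) (w : R) : st :=
  st_sub (st_scale (1/2) (st_add (ale_flux gamma Ul w) (ale_flux gamma Ur w)))
         (st_scale ((1/2) * lam gamma Ul Ur w) (st_sub Ur Ul)).

(* Index conventions: cells j : Z; w j denotes w_{j+1/2}, so w (j-1) is w_{j-1/2}.
   Ghat j denotes \hat G_{j+1/2}^n, lamh j denotes lambda_{j+1/2}^n. *)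
Definition Ghat (gamma : R) (U : Z -> st) (w : Z -> R) (j : Z) : st :=
  rusanov gamma (U j) (U (j + 1)%Z) (w j).
Definition lamh (gamma : R) (U : Z -> st) (w : Z -> R) (j : Z) : R :=
  lam gamma (U j) (U (j + 1)%Z) (w j).

Definition h_new (h : Z -> R) (w : Z -> R) (dt : R) (j : Z) : R :=
  h j + dt * (w j - w (j - 1)%Z).

Definition U_new (gamma : R) (h : Z -> R) (U : Z -> st) (w : Z -> R) (dt : R)
    (j : Z) : st :=
  st_scale (/ h_new h w dt j)
    (st_sub (st_scale (h j) (U j))
            (st_scale dt (st_sub (Ghat gamma U w j) (Ghat gamma U w (j - 1)%Z)))).

(* The admissible states (positive density and internal energy) form a convex
   cone, because the internal energy E - m^2/(2 rho) is concave and positively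
   homogeneous.  Substituting the Rusanov fluxes, h_j^{n+1} U_j^{n+1} becomes a
   nonnegative combination of U_j and of the two Lax-Friedrichs states
   (lambda + w) U_{j+1} - f(U_{j+1}) and (lambda - w) U_{j-1} + f(U_{j-1}),
   which are admissible because lambda dominates |v - w| + c.  The two CFL
   conditions make the coefficient of U_j nonnegative, and since
   lambda_{j-1/2} + lambda_{j+1/2} > |w_{j+1/2} - w_{j-1/2}| this also forces
   h_j^{n+1} > 0. *)

From Stdlib Require Import Reals ZArith Lra.
Open Scope R_scope.

Definition internal_energy (A : st) : R := s_E A - (s_mom A)^2 / (2 * s_rho A).

Definition admissible (A : st) : Prop := 0 < s_rho A /\ 0 < internal_energy A.

Lemma admissible_pres (g : R) (A : st) :
  1 < g -> admissible A <-> 0 < s_rho A /\ 0 < pres g A.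
Proof.
  intros Hg.
  change (pres g A) with ((g - 1) * internal_energy A).
  unfold admissible; split; intros [Hr Hq]; split; auto; nra.
Qed.

Lemma internal_energy_add_scale (k : R) (A B : st) :
  0 <= k -> 0 < s_rho A -> 0 < s_rho B ->
  k * internal_energy A + internal_energy B
  <= internal_energy (st_add (st_scale k A) B).
Proof.
  intros Hk HA HB.
  set (d := s_mom A * s_rho B - s_mom B * s_rho A).
  assert (Hgap : internal_energy (st_add (st_scale k A) B)
                 - (k * internal_energy A + internal_energy B)
                 = k * d ^ 2 / (2 * s_rho A * s_rho B * (k * s_rho A + s_rho B))).
  { unfold internal_energy, d; simpl; field; nra. }
  assert (0 <= k * d ^ 2 / (2 * s_rho A * s_rho B * (k * s_rho A + s_rho B))).
  { apply Rle_mult_inv_pos; [|repeat apply Rmult_lt_0_compat; nra].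
    apply Rmult_le_pos; [lra | apply pow2_ge_0]. }
  lra.
Qed.

Lemma admissible_add_scale (k : R) (A B : st) :
  0 <= k -> admissible A -> admissible B -> admissible (st_add (st_scale k A) B).
Proof.
  intros Hk [HrA HqA] [HrB HqB].
  pose proof (internal_energy_add_scale k A B Hk HrA HrB).
  split; simpl; nra.
Qed.

Lemma admissible_scale (k : R) (A : st) :
  0 < k -> admissible A -> admissible (st_scale k A).
Proof.
  intros Hk [Hr Hq].
  assert (Hie : internal_energy (st_scale k A) = k * internal_energy A).
  { unfold internal_energy; simpl; field; lra. }
  split; [simpl; nra | rewrite Hie; nra].
Qed.

Lemma sound_pos_sqr (g : R) (U : st) :
  1 < g -> 0 < s_rho U -> 0 < pres g U ->
  0 < sound g U /\ sound g U ^ 2 = g * pres g U / s_rho U.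
Proof.
  intros Hg Hr Hp.
  assert (Harg : 0 < g * pres g U / s_rho U) by (apply Rdiv_lt_0_compat; nra).
  unfold sound; split; [apply sqrt_lt_R0 | rewrite <- Rsqr_pow2; apply Rsqr_sqrt]; lra.
Qed.

(* Lax-Friedrichs states a U - s f(U); the Rusanov update uses s = 1 and s = -1. *)
Definition lf_state (g a s : R) (U : st) : st :=
  st_add (st_scale a U) (st_scale (- s) (flux g U)).

Lemma lf_state_rho (g a s : R) (U : st) :
  0 < s_rho U -> s_rho (lf_state g a s U) = (a - s * vel U) * s_rho U.
Proof. intros Hr; unfold lf_state, flux, vel; simpl; field; lra. Qed.

Lemma internal_energy_lf_state (g a s : R) (U : st) :
  0 < s_rho U -> a - s * vel U <> 0 ->
  internal_energy (lf_state g a s U)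
  = (a - s * vel U) * internal_energy U
    - s ^ 2 * pres g U ^ 2 / (2 * (a - s * vel U) * s_rho U).
Proof.
  intros Hr Ha.
  unfold internal_energy, lf_state, flux, pres, vel in *; simpl.
  field.
  split; [lra|].
  replace (a * s_rho U - s * s_mom U) with ((a - s * (s_mom U / s_rho U)) * s_rho U)
    by (field; lra).
  apply Rmult_integral_contrapositive_currified; lra.
Qed.

Lemma admissible_lf_state (g a s : R) (U : st) :
  1 < g -> s ^ 2 <= 1 -> admissible U -> sound g U <= a - s * vel U ->
  admissible (lf_state g a s U).
Proof.
  intros Hg Hs HU Hc.
  pose proof HU as [Hr Hq].
  pose proof (proj1 (admissible_pres g U Hg) HU) as [_ Hp].
  destruct (sound_pos_sqr g U Hg Hr Hp) as [Hc0 Hc2].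
  assert (Hal : 0 < a - s * vel U) by lra.
  split.
  - rewrite lf_state_rho by lra. apply Rmult_lt_0_compat; lra.
  - rewrite internal_energy_lf_state by (try apply Rgt_not_eq; lra).
    revert Hal Hc0 Hc2 Hc. generalize (a - s * vel U) (sound g U). intros al c Hal Hc0 Hc2 Hc.
    assert (Hal2 : g * pres g U <= al ^ 2 * s_rho U).
    { replace (g * pres g U) with (c ^ 2 * s_rho U) by (rewrite Hc2; field; lra).
      apply Rmult_le_compat_r; [lra|]. apply pow_incr; lra. }
    change (pres g U) with ((g - 1) * internal_energy U) in *.
    revert Hq Hp Hal2. generalize (internal_energy U). intros q Hq Hp Hal2.
    apply Rlt_0_minus.
    apply (Rmult_lt_reg_r (2 * al * s_rho U)); [nra|].
    replace (s ^ 2 * ((g - 1) * q) ^ 2 / (2 * al * s_rho U) * (2 * al * s_rho U))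
      with (s ^ 2 * ((g - 1) * q) ^ 2) by (field; lra).
    (* with p = (g-1) q:  s^2 p^2 <= (g-1)^2 q^2 < 2 g (g-1) q^2 <= 2 al^2 rho q *)
    assert (Hpq : 0 <= ((g - 1) * q) ^ 2) by apply pow2_ge_0.
    assert (0 < (g - 1) * q * q) by (apply Rmult_lt_0_compat; nra).
    assert (2 * g * (g - 1) * q * q <= 2 * q * (al ^ 2 * s_rho U)) by nra.
    nra.
Qed.

Lemma rusanov_update_split (g h dt wl wr : R) (Ul U Ur : st) :
  st_sub (st_scale h U) (st_scale dt (st_sub (rusanov g U Ur wr) (rusanov g Ul U wl)))
  = st_add
      (st_scale (h + dt / 2 * (wr - wl) - dt / 2 * (lam g Ul U wl + lam g U Ur wr)) U)
      (st_add (st_scale (dt / 2) (lf_state g (lam g U Ur wr + wr) 1 Ur))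
              (st_scale (dt / 2) (lf_state g (lam g Ul U wl - wl) (-1) Ul))).
Proof.
  unfold rusanov, ale_flux, lf_state, st_sub, st_add, st_scale.
  cbn [s_rho s_mom s_E].
  f_equal; field.
Qed.

Lemma Rabs_ge_opp (x : R) : - x <= Rabs x.
Proof. rewrite <- Rabs_Ropp. apply Rle_abs. Qed.

Lemma lam_add_gt_jump (g wl wr : R) (Ul U Ur : st) :
  1 < g -> admissible U -> Rabs (wr - wl) < lam g Ul U wl + lam g U Ur wr.
Proof.
  intros Hg HU.
  pose proof HU as [Hr _].
  pose proof (proj2 (proj1 (admissible_pres g U Hg) HU)) as Hp.
  destruct (sound_pos_sqr g U Hg Hr Hp) as [Hc _].
  assert (Hl : Rabs (vel U - wl) + sound g U <= lam g Ul U wl) by apply Rmax_r.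
  assert (Hr' : Rabs (vel U - wr) + sound g U <= lam g U Ur wr) by apply Rmax_l.
  pose proof (Rle_abs (vel U - wl)). pose proof (Rle_abs (vel U - wr)).
  pose proof (Rabs_ge_opp (vel U - wl)). pose proof (Rabs_ge_opp (vel U - wr)).
  apply Rabs_def1; lra.
Qed.

Lemma rusanov_update_admissible (g h dt wl wr : R) (Ul U Ur : st) :
  1 < g -> 0 < dt -> admissible Ul -> admissible U -> admissible Ur ->
  dt / 2 * (lam g Ul U wl + lam g U Ur wr) <= h + dt / 2 * (wr - wl) ->
  0 < h + dt * (wr - wl) /\
  admissible (st_scale (/ (h + dt * (wr - wl)))
    (st_sub (st_scale h U)
            (st_scale dt (st_sub (rusanov g U Ur wr) (rusanov g Ul U wl))))).
Proof.
  intros Hg Hdt HUl HU HUr Hcoef.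
  assert (Hjump := lam_add_gt_jump g wl wr Ul U Ur Hg HU).
  pose proof (Rabs_ge_opp (wr - wl)).
  assert (Hh : 0 < h + dt * (wr - wl)) by nra.
  split; [exact Hh|].
  assert (HlfR : admissible (lf_state g (lam g U Ur wr + wr) 1 Ur)).
  { apply admissible_lf_state; auto; [simpl; lra|].
    assert (Rabs (vel Ur - wr) + sound g Ur <= lam g U Ur wr) by apply Rmax_r.
    pose proof (Rle_abs (vel Ur - wr)). lra. }
  assert (HlfL : admissible (lf_state g (lam g Ul U wl - wl) (-1) Ul)).
  { apply admissible_lf_state; auto; [simpl; lra|].
    assert (Rabs (vel Ul - wl) + sound g Ul <= lam g Ul U wl) by apply Rmax_l.
    pose proof (Rabs_ge_opp (vel Ul - wl)). lra. }
  rewrite rusanov_update_split.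
  apply admissible_scale; [apply Rinv_0_lt_compat; exact Hh|].
  apply admissible_add_scale; [lra | exact HU|].
  apply admissible_add_scale; [lra | exact HlfR|].
  apply admissible_scale; [lra | exact HlfL].
Qed.

Lemma cfl_update_coefficient (beta dt h dw L : R) :
  0 < beta < 1 -> 0 < dt -> 0 < h -> 0 < L ->
  dt <= (1 - beta / 2) * h / (L / 2) ->
  (dw <> 0 -> dt <= beta * h / Rabs dw) ->
  dt / 2 * L <= h + dt / 2 * dw.
Proof.
  intros Hbeta Hdt Hh HL HL' Hdw.
  assert (HwaveL : dt * L <= (2 - beta) * h).
  { apply (Rmult_le_compat_r (L / 2)) in HL'; [|lra].
    replace ((1 - beta / 2) * h / (L / 2) * (L / 2)) with ((1 - beta / 2) * h)
      in HL' by (field; lra).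
    lra. }
  assert (Hmesh : dt * Rabs dw <= beta * h).
  { destruct (Req_dec dw 0) as [->|Hdw0].
    - rewrite Rabs_R0. nra.
    - specialize (Hdw Hdw0).
      assert (Habs : 0 < Rabs dw) by (apply Rabs_pos_lt; exact Hdw0).
      apply (Rmult_le_compat_r (Rabs dw)) in Hdw; [|lra].
      replace (beta * h / Rabs dw * Rabs dw) with (beta * h) in Hdw by (field; lra).
      exact Hdw. }
  pose proof (Rabs_ge_opp dw). nra.
Qed.

Theorem theorem1 (gamma beta dt : R) (h w : Z -> R) (U : Z -> st)
  (Hgamma : 1 < gamma)
  (Hbeta : 0 < beta < 1)
  (Hdt : 0 < dt)
  (Hh : forall j, 0 < h j)
  (Hrho : forall j, 0 < s_rho (U j))
  (Hp : forall j, 0 < pres gamma (U j))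
  (HCFL1 : forall j,
      dt <= (1 - beta / 2) * h j
            / ((lamh gamma U w (j - 1)%Z + lamh gamma U w j) / 2))
  (HCFL2 : forall j, w j <> w (j - 1)%Z ->
      dt <= beta * h j / Rabs (w j - w (j - 1)%Z)) :
  forall j,
    0 < h_new h w dt j /\
    0 < s_rho (U_new gamma h U w dt j) /\
    0 < pres gamma (U_new gamma h U w dt j).
Proof.
  intro j.
  assert (HU : forall k, admissible (U k))
    by (intro k; apply (admissible_pres gamma); auto).
  pose proof (HCFL1 j) as HCFL.
  unfold h_new, U_new, Ghat; unfold lamh in HCFL.
  replace (j - 1 + 1)%Z with j in * by ring.
  pose proof (lam_add_gt_jump gamma (w (j - 1)%Z) (w j) (U (j - 1)%Z) (U j) (U (j + 1)%Z)
                Hgamma (HU j)) as Hjump.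
  destruct (rusanov_update_admissible gamma (h j) dt (w (j - 1)%Z) (w j)
              (U (j - 1)%Z) (U j) (U (j + 1)%Z) Hgamma Hdt (HU _) (HU _) (HU _))
    as [Hh' Hadm].
  { apply (cfl_update_coefficient beta); auto.
    - pose proof (Rabs_pos (w j - w (j - 1)%Z)). lra.
    - intro Hdw. apply HCFL2. intro E. apply Hdw. rewrite E. ring. }
  split; [exact Hh'|].
  apply (admissible_pres gamma); assumption.
Qed.
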